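(* Let $\mathcal{X}=\{x_1,\dots,x_N\}$, $\Theta=\{\theta_1,\dots,\theta_M\}$, $\mathcal{A}$ finite with $|\mathcal{A}|=K$, utilities $v_D,v_U:\mathcal{X}\times\Theta\times\mathcal{A}\to\mathbb{R}$, beliefs $b_D(\cdot|x)\in\Delta\Theta$ for $x\in\mathcal{X}$, a common prior $\mathbf p^0\in\Delta\mathcal{X}$, and the signal set $\mathcal{S}=\{s_{\{a^1,\dots,a^M\}}:a^l\in\mathcal{A}\}$ with $K^M$ elements. Call a generator $\pi:\mathcal{X}\to\Delta\mathcal{S}$ credible if $\sum_{x\in\mathcal{X}}[v_U(x,\theta_l,a^l)-v_U(x,\theta_l,a^h)]\pi(s_{\{a^1,\dots,a^M\}}|x)\mathbf p^0(x)\ge0$ for all $s_{\{a^1,\dots,a^M\}}\in\mathcal{S}$, $a^h\in\mathcal{A}$, $l\in\{1,\dots,M\}$, and let $$\bar v_D(\pi,\mathbf p^0)=\sum_{x}\mathbf p^0(x)\sum_{s_{\{a^1,\dots,a^M\}}\in\mathcal{S}}\pi(s_{\{a^1,\dots,a^M\}}|x)\sum_{l=1}^M b_D(\theta_l|x)v_D(x,\theta_l,a^l).$$ Call a credible generator optimal if it maximizes $\bar v_D(\cdot,\mathbf p^0)$ over all credible generators, and let $V_D(\mathbf p^0)$ be this maximum. Then the set of optimal generators consists of either exactly one or infinitely many generators, all achieving $V_D(\mathbf p^0)$. Moreover, there exists an optimal generator $\pi^*$ such that, for each state $x\in\mathcal{X}$, $\pi^*(s|x)=0$ for at least $K^M-N$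 signals $s\in\mathcal{S}$.
   Context: This is the benchmark case of a defender–user game: the defender cannot modulate utilities (no utility transfer) and both the defender and every user type hold the same prior $\mathbf p^0$ over the state. A signal $s_{\{a^1,\dots,a^M\}}$ is a security policy prescribing action $a^l$ to type $\theta_l$; credibility means every prescribed action is a best response of that type under the Bayesian posterior. *)

From HB Require Import structures.
From mathcomp Require Import all_boot all_order all_algebra.
From mathcomp Require Import reals.
Set Implicit Arguments. Unset Strict Implicit. Unset Printing Implicit Defensive.
Import Order.TTheory GRing.Theory Num.Theory.
Local Open Scope ring_scope.

Section Game.
Variables (R : realType) (X Th A : finType).

(* A signal s_{a^1,...,a^M} is a security policy: a map from types to actions. *)
Definition signal := {ffun Th -> A}.

Definition is_dist (T : finType) (p : T -> R) : Prop :=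
  (forall t, 0 <= p t) /\ \sum_(t : T) p t = 1.

(* A generator pi : X -> Delta S ; pi x s = pi(s | x). *)
Definition generator := {ffun X -> {ffun signal -> R}}.

Definition is_generator (pi : generator) : Prop :=
  forall x, is_dist (fun s : signal => pi x s).

Variables (vD vU : X -> Th -> A -> R) (bD : X -> Th -> R) (p0 : X -> R).

Definition credible (pi : generator) : Prop :=
  is_generator pi /\
  forall (s : signal) (ah : A) (l : Th),
    0 <= \sum_(x : X) (vU x l (s l) - vU x l ah) * pi x s * p0 x.

Definition vbarD (pi : generator) : R :=
  \sum_(x : X) p0 x * \sum_(s : signal) pi x s *
     \sum_(l : Th) bD x l * vD x l (s l).

Definition optimal (pi : generator) : Prop :=
  credible pi /\ forall pi', credible pi' -> vbarD pi' <= vbarD pi.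

End Game.

From HB Require Import structures.
From mathcomp Require Import all_boot all_order all_algebra.
From mathcomp Require Import reals.
From mathcomp Require Import ring lra.
From Stdlib Require Import Classical.
Set Implicit Arguments. Unset Strict Implicit. Unset Printing Implicit Defensive.
Import Order.TTheory GRing.Theory Num.Theory.
Local Open Scope ring_scope.

(* Credible generators form a polytope in the space of maps X -> R^S: each
   pi(.|x) lies in a simplex and credibility is a family of linear
   inequalities.  The polytope is nonempty (always sending the signal that
   prescribes to each type its best response under p0 is credible) and
   bounded, so the linear objective vbarD attains its maximum at a
   vertex; the optimal generators form a convex set, hence there is one or
   infinitely many.  At an optimal vertex pi* at most |X| signals are ever
   sent: otherwise some nonzero weighting d of the sent signals satisfies
   sum_s d(s) pi*(s|x) = 0 for every x, and the perturbation
   pi*(s|x) d(s) keeps every tight constraint tight. *)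

Lemma finite_convex_subsingleton (R : numFieldType) (V : lmodType R)
    (P : V -> Prop) (s : seq V) :
  (forall z w t, P z -> P w -> 0 <= t <= 1 -> P (t *: (w - z) + z)) ->
  (forall z, P z -> z \in s) -> forall z w, P z -> P w -> w = z.
Proof.
move=> P_convex P_finite z w Pz Pw; apply/eqP/contraT; rewrite -subr_eq0 => wz.
pose f k := (k.+1%:R)^-1 *: (w - z) + z.
have f_inj : injective f.
  move=> k1 k2 /addIr/eqP; rewrite -subr_eq0 -scalerBl scaler_eq0 (negPf wz) orbF.
  by rewrite subr_eq0 => /eqP/invr_inj/eqP; rewrite eqr_nat eqSS => /eqP.
have f_in k : f k \in s.
  by apply/P_finite/P_convex; rewrite // invr_ge0 ler0n invf_le1 ?ltr0Sn ?ler1n.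
have := @uniq_leq_size _ [seq f k | k <- iota 0 (size s).+1] s.
rewrite (map_inj_uniq f_inj) iota_uniq size_map size_iota ltnn; apply=> //.
by move=> _ /mapP[k _ ->].
Qed.

Lemma exists_kernel_weight (F : fieldType) (S Y : finType) (B : {set S})
    (f : S -> Y -> F) :
  (#|Y| < #|B|)%N ->
  exists2 d : S -> F, (exists2 s, s \in B & d s != 0)
                    & forall y, \sum_(s in B) d s * f s y = 0.
Proof.
move=> YB; pose M := \matrix_(i < #|B|, k < #|Y|) f (enum_val i) (enum_val k).
have : kermx M != 0.
  by rewrite kermx_eq0 /row_free neq_ltn (leq_ltn_trans (rank_leq_col M) YB).
case/rowV0Pn => v /sub_kermxP vM /rV0Pn[i vi]; have iB := enum_valP i.
exists (fun s => v 0 (enum_rank_in iB s)).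
  by exists (enum_val i); rewrite ?enum_valK_in.
move=> y; have := congr1 (fun m : 'rV_#|Y| => m 0 (enum_rank y)) vM.
rewrite !mxE => vMy; rewrite -[RHS]vMy big_enum_val; apply: eq_bigr => j _.
by rewrite enum_valK_in mxE enum_rankK.
Qed.

Section LinearProgram.
Variables (R : realFieldType) (V : lmodType R) (J : finType).
Variables (a : J -> {scalar V}) (b : J -> R) (c : {scalar V}).

Definition feasible (z : V) : Prop := forall j, a j z <= b j.
Definition active (z : V) : {set J} := [set j | a j z == b j].
Definition vertex (z : V) : Prop :=
  feasible z /\ forall d, (forall j, j \in active z -> a j d = 0) -> d = 0.
Definition maximizer (z : V) : Prop :=
  feasible z /\ forall w, feasible w -> c w <= c z.

Lemma feasible_segment z w t :
  feasible z -> feasible w -> 0 <= t <= 1 -> feasible (t *: (w - z) + z).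
Proof.
move=> Fz Fw /andP[t_ge0 t_le1] j; rewrite linearP linearB /=.
by have := Fz j; have := Fw j; nra.
Qed.

Lemma maximizer_segment z w t :
  maximizer z -> maximizer w -> 0 <= t <= 1 -> maximizer (t *: (w - z) + z).
Proof.
move=> [Fz Oz] [Fw Ow] t01; split=> [|u Fu]; first exact: feasible_segment.
have czw : c w = c z by apply/eqP; rewrite eq_le Oz // Ow.
by rewrite linearP linearB /= czw subrr mulr0 add0r Oz.
Qed.

Lemma maximizer_unique_or_infinite : (exists z, maximizer z) ->
  (exists z, maximizer z /\ forall w, maximizer w -> w = z)
  \/ ~ exists s : seq V, forall z, maximizer z -> z \in s.
Proof.
move=> [z Oz]; case: (classic (exists s : seq V, forall z, maximizer z -> z \in s)).
  move=> [s Os]; left; exists z; split=> // w Ow.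
  exact: (finite_convex_subsingleton maximizer_segment Os).
by right.
Qed.

Lemma vertex_eq z w : vertex z -> {subset active z <= active w} -> w = z.
Proof.
move=> [_ Kz] zw; apply/eqP; rewrite -subr_eq0; apply/eqP/Kz => j jz.
have := zw j jz; rewrite !inE in jz * => /eqP ajw.
by rewrite linearB /= ajw (eqP jz) subrr.
Qed.

Lemma vertices_finite : exists s : seq V, forall z, vertex z <-> z \in s.
Proof.
suff [s Hs] : exists s : seq V,
    forall z, vertex z /\ active z \in enum {set J} <-> z \in s.
  by exists s => z; split=> [Vz|/Hs[] //]; apply/Hs; rewrite mem_enum.
elim: (enum {set J}) => [|T Ts [s Hs]]; first by exists [::] => z; split=> -[].
case: (classic (exists2 w, vertex w & active w = T)) => [[w Vw wT]|noT].
  exists (w :: s) => z; split.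
    case=> Vz; rewrite in_cons => /orP[/eqP zT|zTs].
      by rewrite (@vertex_eq w z) ?mem_head // wT zT.
    by rewrite in_cons; apply/orP; right; apply/Hs.
  rewrite in_cons => /orP[/eqP->|/Hs[Vz zTs]].
    by rewrite in_cons wT eqxx.
  by rewrite in_cons zTs orbT.
exists s => z; split; last by move=> /Hs[Vz zTs]; rewrite in_cons zTs orbT.
case=> Vz; rewrite in_cons => /orP[/eqP zT|zTs]; [by case: noT; exists z | exact/Hs].
Qed.

Lemma move_to_boundary z e : feasible z -> (exists j, 0 < a j e) ->
  exists lam, [/\ 0 <= lam, feasible (lam *: e + z)
                & exists2 j, 0 < a j e & j \in active (lam *: e + z)].
Proof.
move=> Fz [j0 ej0].
(* Ratio test: jm is the first constraint to become tight along e. *)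
have [jm ejm jm_min] :=
  @arg_minP _ _ _ j0 (fun j => 0 < a j e) (fun j => (b j - a j z) / a j e) ej0.
pose lam := (b jm - a jm z) / a jm e.
have lam_ge0 : 0 <= lam by rewrite divr_ge0 ?subr_ge0 ?Fz ?ltW.
have shift j : a j (lam *: e + z) = lam * a j e + a j z by rewrite linearP.
exists lam; split=> //.
  move=> j; rewrite shift; case: (ltP 0 (a j e)) => ej.
    by rewrite -lerBrDr -ler_pdivlMr // jm_min.
  have := Fz j; have : lam * a j e <= 0 by rewrite mulr_ge0_le0.
  lra.
by exists jm; rewrite // inE shift /lam divfK ?lt0r_neq0 // subrK.
Qed.

Hypothesis recession_trivial : forall d, d != 0 -> exists j, 0 < a j d.

Lemma improve_step z : feasible z -> ~ vertex z ->
  exists z', [/\ feasible z', c z <= c z' & active z \proper active z'].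
Proof.
move=> Fz NVz.
have [d Kd d_neq0] : exists2 d, (forall j, j \in active z -> a j d = 0) & d != 0.
  apply: NNPP => noD; apply: NVz; split=> // d Kd.
  by apply: NNPP => /eqP d_neq0; apply: noD; exists d.
pose e := if 0 <= c d then d else - d.
have Ke j : j \in active z -> a j e = 0.
  by move=> /Kd; rewrite /e; case: ifP => // _; rewrite linearN => ->; rewrite oppr0.
have ce : 0 <= c e.
  by rewrite /e; case: ifPn => // cd_lt0; rewrite linearN oppr_ge0 ltW // ltNge.
have e_neq0 : e != 0 by rewrite /e; case: ifP; rewrite ?oppr_eq0.
have [lam [lam_ge0 Fz' [j ej jz']]] :=
  move_to_boundary Fz (recession_trivial e_neq0).
exists (lam *: e + z); split=> //; first by rewrite linearP /= lerDr mulr_ge0.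
apply/properP; split.
  apply/subsetP => i iz; rewrite inE linearP /= Ke // mulr0 add0r.
  by rewrite inE in iz.
by exists j => //; apply: contraTN ej => /Ke ->; rewrite ltxx.
Qed.

Lemma exists_vertex_ge z : feasible z -> exists2 v, vertex v & c z <= c v.
Proof.
have [n] := ubnP #|~: active z|; elim: n z => // n IHn z slack_z Fz.
case: (classic (vertex z)) => [Vz|NVz]; first by exists z.
have [z' [Fz' czz' zz']] := improve_step Fz NVz.
have [|v Vv cz'v] := IHn z' _ Fz'; last by exists v; last exact: le_trans czz' cz'v.
by rewrite -ltnS (leq_trans _ slack_z) // ltnS proper_card // properC.
Qed.

Lemma exists_maximizer_vertex z0 :
  feasible z0 -> exists2 z, vertex z & maximizer z.
Proof.
move=> Fz0; have [s Hs] := vertices_finite.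
have [v0 Vv0 _] := exists_vertex_ge Fz0; have v0s : v0 \in s by apply/Hs.
have [[z zs] _ zmax] :=
  @arg_maxP _ _ _ (SeqSub v0s) xpredT (fun v => c (val v)) isT.
have Vz : vertex z by apply/Hs.
exists z => //; split=> [|w Fw]; first by case: Vz.
have [v Vv cwv] := exists_vertex_ge Fw.
exact: le_trans cwv (zmax (SeqSub ((Hs v).1 Vv)) isT).
Qed.

End LinearProgram.

Section CredibleGenerators.
Variables (R : realType) (X Th A : finType).
Variables (vD vU : X -> Th -> A -> R) (bD : X -> Th -> R) (p0 : X -> R).

Local Notation S := (signal Th A).
Local Notation G := {ffun X -> {ffun S -> R^o}}.

(* [inl (x, s)] encodes pi(s|x) >= 0, [inr (inl x)] and [inr (inr (inl x))]
   the two halves of sum_s pi(s|x) = 1, and [inr (inr (inr (s, ah, l)))] the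
   credibility of a^l against ah for type l under signal s. *)
Definition constraint : Type := ((X * S) + (X + (X + (S * A * Th))))%type.

Definition constraint_lhs (j : constraint) (pi : G) : R :=
  match j with
  | inl (x, s) => - pi x s
  | inr (inl x) => \sum_s pi x s
  | inr (inr (inl x)) => - \sum_s pi x s
  | inr (inr (inr (s, ah, l))) =>
      - \sum_x (vU x l (s l) - vU x l ah) * pi x s * p0 x
  end.

Definition constraint_rhs (j : constraint) : R :=
  match j with
  | inr (inl _) => 1
  | inr (inr (inl _)) => -1
  | _ => 0
  end.

Let regular_scaleE (k y : R^o) : k *: y = k * y. Proof. by []. Qed.

Fact constraint_lhs_is_linear j : scalar (constraint_lhs j).
Proof.
move=> k u v; case: j => [[x s]|[x|[x|[[s ah] l]]]] /=.
- by rewrite !ffunE regular_scaleE; ring.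
- by rewrite mulr_sumr -big_split; apply: eq_bigr => s _; rewrite !ffunE.
- rewrite mulrN -opprD mulr_sumr -big_split; congr (- _).
  by apply: eq_bigr => s _; rewrite !ffunE.
- rewrite mulrN -opprD mulr_sumr -big_split; congr (- _).
  by apply: eq_bigr => x _; rewrite !ffunE regular_scaleE /=; ring.
Qed.

HB.instance Definition _ j := GRing.isLinear.Build R G R *%R
  (constraint_lhs j) (constraint_lhs_is_linear j).

(* vbarD typed on the module G, so that its linear structure can be found. *)
Definition payoff (pi : G) : R := vbarD vD bD p0 pi.

Fact payoff_is_linear : scalar payoff.
Proof.
move=> k u v; rewrite /payoff /vbarD mulr_sumr -big_split.
apply: eq_bigr => x _ /=.
rewrite mulrCA -mulrDr; congr (_ * _); rewrite mulr_sumr -big_split.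
by apply: eq_bigr => s _; rewrite !ffunE regular_scaleE /=; ring.
Qed.

HB.instance Definition _ := GRing.isLinear.Build R G R *%R
  payoff payoff_is_linear.

Local Notation vertexG := (vertex constraint_lhs constraint_rhs).

Lemma credible_feasible (pi : G) :
  credible vU p0 pi <-> feasible constraint_lhs constraint_rhs pi.
Proof.
split=> [[pi_gen pi_cred]|pi_feas].
  case=> [[x s]|[x|[x|[[s ah] l]]]] /=; rewrite ?oppr_le0 ?(pi_gen x).2 //.
  exact: (pi_gen x).1.
split=> [x|s ah l]; last first.
  by have := pi_feas (inr (inr (inr (s, ah, l)))); rewrite /= oppr_le0.
split=> [s|]; first by have := pi_feas (inl (x, s)); rewrite /= oppr_le0.
apply/eqP; rewrite eq_le (pi_feas (inr (inl x))) -lerN2.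
exact: (pi_feas (inr (inr (inl x)))).
Qed.

Lemma optimal_maximizer (pi : G) :
  optimal vD vU bD p0 pi <-> maximizer constraint_lhs constraint_rhs payoff pi.
Proof.
split=> -[/credible_feasible Fpi Opi]; split=> // w /credible_feasible.
all: exact: Opi.
Qed.

Lemma constraint_recession (d : G) :
  d != 0 -> exists j, 0 < constraint_lhs j d.
Proof.
move=> d_neq0; have [x [s dxs_neq0]] : exists x s, d x s != 0.
  apply: NNPP => d0; move/eqP: d_neq0; apply.
  apply/ffunP => x; apply/ffunP => s.
  by rewrite !ffunE; apply/eqP/negPn/negP => dxs; apply: d0; exists x, s.
case: (classic (exists y t, d y t < 0)) => [[y [t dyt_lt0]]|d_nneg].
  by exists (inl (y, t)); rewrite /= oppr_gt0.
have d_ge0 y t : 0 <= d y t.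
  by rewrite leNgt; apply/negP => dyt_lt0; apply: d_nneg; exists y, t.
exists (inr (inl x)); rewrite /= (bigD1 s) //=.
by apply: ltr_pwDl; rewrite ?sumr_ge0 // lt_def dxs_neq0 d_ge0.
Qed.

Lemma exists_credible : (0 < #|A|)%N -> exists pi, credible vU p0 pi.
Proof.
case/card_gt0P => a0 _.
pose sstar : S := [ffun l => [arg max_(a > a0) \sum_x vU x l a * p0 x]%O].
exists [ffun x => [ffun s => (s == sstar)%:R]]; split=> [x|s ah l].
  split=> [s|]; first by rewrite !ffunE ler0n.
  rewrite (bigD1 sstar) //= big1 => [|s /negPf s_neq]; rewrite !ffunE ?s_neq //.
  by rewrite eqxx addr0.
have [->|/negPf s_neq] := eqVneq s sstar; last first.
  by rewrite big1 // => x _; rewrite !ffunE s_neq mulr0 mul0r.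
under eq_bigr do rewrite !ffunE eqxx mulr1 mulrBl.
rewrite sumrB subr_ge0; case: arg_maxP => // a _; exact.
Qed.

Lemma vertex_support_card pi : vertexG pi ->
  (#|[set s | [exists x, pi x s != 0%R]]| <= #|X|)%N.
Proof.
move=> [_ pi_vertex]; set B := [set s | _]; rewrite leqNgt; apply/negP => XB.
have [d [s0 s0B ds0_neq0] d_ker] := exists_kernel_weight (fun s x => pi x s) XB.
have pi_out x s : s \notin B -> pi x s = 0.
  by rewrite inE negb_exists => /forallP/(_ x)/negPn/eqP.
have d_sum x : \sum_s d s * pi x s = 0.
  rewrite (bigID (mem B)) /= d_ker add0r big1 // => s /pi_out->.
  by rewrite mulr0.
pose D : G := [ffun x => [ffun s => d s * pi x s]].
have D_sum x : \sum_s D x s = 0.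
  by rewrite -[RHS](d_sum x); apply: eq_bigr => s _; rewrite !ffunE.
have : D != 0.
  move: s0B; rewrite inE => /existsP[x0 pix0_neq0]; apply/eqP.
  move=> /ffunP/(_ x0)/ffunP/(_ s0)/eqP; rewrite !ffunE.
  by rewrite mulf_eq0 (negPf ds0_neq0) (negPf pix0_neq0).
apply/negP; rewrite negbK; apply/eqP/pi_vertex => j; rewrite inE => /eqP.
case: j => [[x s]|[x|[x|[[s ah] l]]]] /= tight.
- by rewrite !ffunE -[pi x s]opprK tight oppr0 mulr0 oppr0.
- by rewrite D_sum.
- by rewrite D_sum oppr0.
- rewrite (eq_bigr (fun y =>
            d s * ((vU y l (s l) - vU y l ah) * pi y s * p0 y))).
    by rewrite -mulr_sumr -mulrN tight mulr0.
  by move=> y _; rewrite !ffunE /=; ring.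
Qed.

Lemma vertex_zeros_card pi x : vertexG pi ->
  (#|A| ^ #|Th| - #|X| <= #|[set s : S | pi x s == 0%R]|)%N.
Proof.
move=> /vertex_support_card; set B := [set s | _] => BX.
have outB : ~: B \subset [set s : S | pi x s == 0].
  by apply/subsetP => s; rewrite !inE negb_exists => /forallP/(_ x)/negPn.
apply: leq_trans (subset_leq_card outB); rewrite -card_ffun -(cardsC B).
by rewrite leq_subLR leq_add2r.
Qed.

End CredibleGenerators.

Theorem proposition5 (R : realType) (X Th A : finType)
    (vD vU : X -> Th -> A -> R) (bD : X -> Th -> R) (p0 : X -> R) :
  (0 < #|A|)%N ->
  (forall x, is_dist (bD x)) ->
  is_dist p0 ->
  ((exists pi, optimal vD vU bD p0 pi /\
       forall pi', optimal vD vU bD p0 pi' -> pi' = pi)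
   \/ ~ (exists l : seq (generator R X Th A),
            forall pi, optimal vD vU bD p0 pi -> pi \in l))
  /\ exists pistar, optimal vD vU bD p0 pistar /\
       forall x : X,
         (#|A| ^ #|Th| - #|X| <= #|[set s : signal Th A | pistar x s == 0%R]|)%N.
Proof.
move=> A_gt0 _ _.
have [pi0 /credible_feasible pi0_feas] := exists_credible vU p0 A_gt0.
have [pistar pistar_vertex pistar_max] :=
  exists_maximizer_vertex (payoff vD bD p0) (constraint_recession vU p0) pi0_feas.
split; last first.
  exists pistar; split=> [|x]; first exact/optimal_maximizer.
  exact: vertex_zeros_card x pistar_vertex.
have [[pi [pi_max pi_uniq]]|infinite] :=
  maximizer_unique_or_infinite (ex_intro _ pistar pistar_max).
  left; exists pi; split=> [|pi' /optimal_maximizer]; last exact: pi_uniq.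
  exact/optimal_maximizer.
right=> -[l l_opt]; apply: infinite.
by exists l => pi /optimal_maximizer; exact: l_opt.
Qed.
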